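(* Let $M_\lambda$ ($\lambda>0$) and $M$ be as in the context. Then $M_\lambda'(x)\to M'(x)$ as $\lambda\to0^+$, uniformly for $x$ in each compact subset of $[0,\infty)$.
   Context: For $\lambda>0$, $M_\lambda:[0,\infty)\to\mathbb R$ is defined by $M_\lambda(x)=0$ for $0\le x\le1$ and, for all $x>0$, $M_{\lambda}(x+1)=\int_0^x\frac{\lambda e^{-\lambda t}}{1-e^{-\lambda x}}\bigl(M_{\lambda}(t)+M_{\lambda}(x-t)\bigr)\,dt+1$. This is the expected number of intervals at saturation in the exponential parking problem. $M:[0,\infty)\to\mathbb R$ is defined by $M(x)=0$ for $0\le x\le1$ and, for $x>0$, $M(x+1)=\frac2x\int_0^xM(t)\,dt+1$. This is Rényi's expected number of intervals at saturation in the uniform parking problem. Derivatives are taken where they exist. Following the paper's convention, $M'_\lambda(x)=M'(x)=0$ on $(0,1)\cup(1,2)$; the points $x=1,2$, where the derivatives do not exist, are excluded. *)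

From Stdlib Require Import Reals.
From Coquelicot Require Import Coquelicot.
Open Scope R_scope.

Definition is_Renyi_M (M : R -> R) : Prop :=
  (forall x, x <= 1 -> M x = 0) /\
  (forall x, 0 < x -> M (x + 1) = 2 / x * RInt M 0 x + 1).

Definition is_exp_parking_M (lam : R) (Ml : R -> R) : Prop :=
  (forall x, x <= 1 -> Ml x = 0) /\
  (forall x, 0 < x ->
     Ml (x + 1) =
       RInt (fun t => lam * exp (- lam * t) / (1 - exp (- lam * x))
                        * (Ml t + Ml (x - t))) 0 x + 1).

(* Both recursions have the form N(x+1) = 1 + G(x) F(x), N = 0 on (-oo, 1], with
   F(x) = \int_0^x (e^{lam (x-t)} + e^{lam t}) N(t) dt: for M take lam = 0 and G(x) = 1/x;
   for M_lam substitute t := x - t in the half of the kernel containing M_lam(x - t), which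
   gives G(x) = lam / (e^{lam x} - 1).  Such an N equals 1 on (1, 2], is continuous on
   (1, oo), and since G' = -G^2 e^{lam x}, its derivative at x + 1 (x > 1) is an explicit
   polynomial in G(x), e^{lam x}, lam, the two exp-weighted integrals of N, and N(x).
   As lam -> 0+, e^{+-lam x} -> 1 uniformly on compacts and |G_lam(x) - 1/x| <= lam.
   Uniform convergence to bounded limits is preserved by sums, products and integrals, so
   induction over [0, 2 + k] gives M_lam -> M uniformly on compacts, and then the
   derivative formulas converge uniformly; on (0,1) and (1,2) both derivatives vanish. *)

From Stdlib Require Import Reals Lra.
From Coquelicot Require Import Coquelicot.
Open Scope R_scope.

Lemma locally_open_interval (P : R -> Prop) a b x :
  a < x < b -> (forall y, a < y < b -> P y) -> locally x P.
Proof.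
  intros Hx HP.
  apply (filter_imp (fun y => a < y /\ y < b)); [exact HP |].
  exact (open_and _ _ (open_gt a) (open_lt b) x Hx).
Qed.

Lemma at_right0_intro (P : R -> Prop) d :
  0 < d -> (forall l, 0 < l < d -> P l) -> at_right 0 P.
Proof.
  intros Hd HP. exists (mkposreal d Hd). intros l Hl Hl0.
  change (Rabs (l - 0) < d) in Hl. apply HP.
  rewrite Rminus_0_r, Rabs_right in Hl by lra. lra.
Qed.

Lemma at_right0_elim (P : R -> Prop) :
  at_right 0 P -> exists d, 0 < d /\ forall l, 0 < l < d -> P l.
Proof.
  intros [d Hd]. exists d. split; [apply cond_pos |]. intros l Hl.
  apply Hd; [| lra]. change (Rabs (l - 0) < d).
  rewrite Rminus_0_r, Rabs_right by lra. lra.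
Qed.

Lemma at_right0_pos : at_right 0 (fun l => 0 < l).
Proof. unfold at_right, within. apply filter_forall. auto. Qed.

Lemma continuous_exp_scal c x : continuous (fun t => exp (c * t)) x.
Proof. apply (ex_derive_continuous (K := R_AbsRing) (V := R_NormedModule)). auto_derive. auto. Qed.

Lemma continuous_shift (f : R -> R) a x :
  continuous (fun t => f (t + a)) x -> continuous f (x + a).
Proof.
  intros Hf. apply (continuous_ext (fun w => f (w - a + a))).
  { intros w. change (f (w - a + a) = f w). f_equal. ring. }
  apply (continuous_comp (fun w => w - a) (fun t => f (t + a))).
  - apply (ex_derive_continuous (K := R_AbsRing) (V := R_NormedModule)). auto_derive. auto.
  - assert (E : x + a - a = x) by ring. rewrite E. exact Hf.
Qed.

Lemma is_derive_shift (f : R -> R) a x l :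
  is_derive (fun t => f (t + a)) x l -> is_derive f (x + a) l.
Proof.
  intros Hf. apply (is_derive_ext (fun w => f (w - a + a))).
  { intros w. change (f (w - a + a) = f w). f_equal. ring. }
  replace l with (scal 1 l) by apply (scal_one (V := R_NormedModule)).
  apply (is_derive_comp (fun t => f (t + a)) (fun w => w - a)).
  - assert (E : x + a - a = x) by ring. rewrite E. exact Hf.
  - auto_derive; [auto | ring].
Qed.

Lemma RInt_vanishing (f : R -> R) x :
  0 <= x -> (forall t, 0 < t < x -> f t = 0) -> ex_RInt f 0 x /\ RInt f 0 x = 0.
Proof.
  intros Hx Hf.
  assert (E : forall t, Rmin 0 x < t < Rmax 0 x -> (fun _ => 0) t = f t).
  { rewrite Rmin_left, Rmax_right by lra. intros t Ht. symmetry. exact (Hf t Ht). }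
  split.
  - exact (ex_RInt_ext _ _ _ _ E (ex_RInt_const 0 x 0)).
  - rewrite <- (RInt_ext _ _ _ _ E), RInt_const. apply (scal_zero_r (V := R_NormedModule)).
Qed.

Lemma is_RInt_reflect (f : R -> R) x (I : R) :
  is_RInt f 0 x I -> is_RInt (fun t => f (x - t)) 0 x I.
Proof.
  intros Hf.
  assert (Hlin : is_RInt f (-1 * 0 + x) (-1 * x + x) (opp I)).
  { replace (-1 * 0 + x) with x by ring. replace (-1 * x + x) with 0 by ring.
    exact (is_RInt_swap _ _ _ _ Hf). }
  apply is_RInt_comp_lin, is_RInt_opp in Hlin. rewrite opp_opp in Hlin.
  refine (is_RInt_ext _ _ _ _ _ _ Hlin). intros t _.
  change (- (-1 * f (-1 * t + x)) = f (x - t)).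
  replace (-1 * t + x) with (x - t) by ring. ring.
Qed.

Lemma continuous_RInt_upper (f : R -> R) a x :
  locally x (ex_RInt f a) -> continuous (RInt f a) x.
Proof.
  intros Hf. apply (continuous_RInt_1 f a x).
  apply (filter_imp (ex_RInt f a)); [| exact Hf].
  intros w. apply (RInt_correct (V := R_CompleteNormedModule)).
Qed.

Lemma Rabs_exp_sub1_le u : Rabs u <= 1 -> Rabs (exp u - 1) <= 3 * Rabs u.
Proof.
  intros Hu. apply Rabs_le_between in Hu.
  pose proof (exp_ineq1_le u). pose proof (exp_ineq1_le (- u)).
  assert (Hinv : exp u * exp (- u) = 1) by (rewrite <- exp_plus, Rplus_opp_r; apply exp_0).
  assert (H3 : exp u <= 3).
  { destruct (Req_dec u 1) as [-> | Hu1]; [apply exp_le_3 |].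
    left. apply Rlt_le_trans with (exp 1); [apply exp_increasing; lra | apply exp_le_3]. }
  pose proof (exp_pos u).
  destruct (Rle_lt_dec 0 u).
  - rewrite !Rabs_right by lra.
    assert (exp u * (exp (- u) - (1 - u)) >= 0) by (apply Rle_ge, Rmult_le_pos; lra).
    assert (u * (3 - exp u) >= 0) by (apply Rle_ge, Rmult_le_pos; lra).
    nra.
  - assert (exp u < 1) by (rewrite <- exp_0; apply exp_increasing; lra).
    rewrite Rabs_left1, Rabs_left by lra. lra.
Qed.

Definition exp_int (c : R) (N : R -> R) (x : R) : R :=
  RInt (fun t => exp (c * t) * N t) 0 x.

(* [kernel_int lam N x = \int_0^x (exp (lam (x - t)) + exp (lam t)) N(t) dt] *)
Definition kernel_int (lam : R) (N : R -> R) (x : R) : R :=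
  exp (lam * x) * exp_int (- lam) N x + exp_int lam N x.

Definition step_deriv (lam : R) (G N : R -> R) (x : R) : R :=
  - G x ^ 2 * exp (lam * x) * kernel_int lam N x +
  G x * (lam * exp (lam * x) * exp_int (- lam) N x + (1 + exp (lam * x)) * N x).

Lemma continuous_kernel_int lam N x :
  locally x (fun w => forall c, ex_RInt (fun t => exp (c * t) * N t) 0 w) ->
  continuous (kernel_int lam N) x.
Proof.
  intros Hint. unfold kernel_int, exp_int.
  apply (continuous_plus (fun w => exp (lam * w) * exp_int (- lam) N w) (exp_int lam N)).
  - apply (continuous_mult (fun w => exp (lam * w)) (exp_int (- lam) N)).
    + apply continuous_exp_scal.
    + apply continuous_RInt_upper. exact (filter_imp _ _ (fun w Hw => Hw (- lam)) Hint).
  - apply continuous_RInt_upper. exact (filter_imp _ _ (fun w Hw => Hw lam) Hint).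
Qed.

Lemma is_derive_exp_int c N x :
  locally x (ex_RInt (fun t => exp (c * t) * N t) 0) -> continuous N x ->
  is_derive (exp_int c N) x (exp (c * x) * N x).
Proof.
  intros Hint HN.
  apply (is_derive_RInt (V := R_CompleteNormedModule)
           (fun t => exp (c * t) * N t) (exp_int c N) 0 x).
  - apply (filter_imp (ex_RInt (fun t => exp (c * t) * N t) 0)); [| exact Hint].
    intros w. apply (RInt_correct (V := R_CompleteNormedModule)).
  - apply (continuous_mult (fun t => exp (c * t)) N); [apply continuous_exp_scal | exact HN].
Qed.

Lemma is_derive_kernel_int lam N x :
  locally x (fun w => forall c, ex_RInt (fun t => exp (c * t) * N t) 0 w) -> continuous N x ->
  is_derive (kernel_int lam N) x
    (lam * exp (lam * x) * exp_int (- lam) N x + (1 + exp (lam * x)) * N x).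
Proof.
  intros Hint HN.
  assert (HA := is_derive_exp_int (- lam) N x
                  (filter_imp _ _ (fun w Hw => Hw (- lam)) Hint) HN).
  assert (HB := is_derive_exp_int lam N x (filter_imp _ _ (fun w Hw => Hw lam) Hint) HN).
  assert (HE : is_derive (fun w => exp (lam * w)) x (lam * exp (lam * x)))
    by (auto_derive; [auto | ring]).
  assert (Hinv : exp (lam * x) * exp (- lam * x) = 1)
    by (rewrite <- exp_plus; replace (lam * x + - lam * x) with 0 by ring; apply exp_0).
  replace (lam * exp (lam * x) * exp_int (- lam) N x + (1 + exp (lam * x)) * N x) with
    (plus (plus (mult (lam * exp (lam * x)) (exp_int (- lam) N x))
                (mult (exp (lam * x)) (exp (- lam * x) * N x)))
          (exp (lam * x) * N x)).
  - apply (is_derive_plus (fun w => exp (lam * w) * exp_int (- lam) N w) (exp_int lam N));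
      [| exact HB].
    apply (is_derive_mult (fun w => exp (lam * w)) (exp_int (- lam) N)); [exact HE | exact HA |].
    intros; apply Rmult_comm.
  - unfold plus, mult; simpl. rewrite <- Rmult_assoc, Hinv. ring.
Qed.

(* The step equation is assumed only where the weighted integrals exist, since splitting
   the integral that defines [M_lambda] needs them; [parking_eq] removes this proviso. *)
Record parking_rec (lam : R) (G N : R -> R) : Prop := {
  weight_continuous : forall x, 0 < x -> continuous G x;
  parking_init : forall x, x <= 1 -> N x = 0;
  parking_step : forall x, 0 < x ->
    (forall c, ex_RInt (fun t => exp (c * t) * N t) 0 x) ->
    N (x + 1) = 1 + G x * kernel_int lam N x }.

Arguments weight_continuous {lam G N}.
Arguments parking_init {lam G N}.
Arguments parking_step {lam G N}.

Definition bounded_on (f : R -> R) (S : R -> Prop) : Prop :=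
  exists K, forall x, S x -> Rabs (f x) <= K.

Section ParkingRecursion.

Variables (lam : R) (G N : R -> R).
Hypothesis HN : parking_rec lam G N.

Lemma parking_one y : 1 < y <= 2 -> N y = 1.
Proof.
  intros Hy.
  assert (Hvan : forall c, ex_RInt (fun t => exp (c * t) * N t) 0 (y - 1) /\
                           RInt (fun t => exp (c * t) * N t) 0 (y - 1) = 0).
  { intros c. apply RInt_vanishing; [lra |]. intros t Ht. rewrite (parking_init HN) by lra. ring. }
  replace y with (y - 1 + 1) by ring.
  rewrite (parking_step HN) by (lra || (intros c; apply Hvan)).
  unfold kernel_int, exp_int. rewrite (proj2 (Hvan (- lam))), (proj2 (Hvan lam)). ring.
Qed.

Lemma parking_ex_RInt_upto n : (forall y, 1 < y < n -> continuous N y) ->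
  forall f, (forall t, continuous f t) ->
  forall z, 0 <= z < n -> ex_RInt (fun t => f t * N t) 0 z.
Proof.
  intros HNc f Hf z Hz.
  assert (H01 : forall w, 0 <= w <= 1 -> ex_RInt (fun t => f t * N t) 0 w).
  { intros w Hw. apply RInt_vanishing; [lra |].
    intros t Ht. rewrite (parking_init HN) by lra. ring. }
  assert (H12 : forall w, 1 <= w <= 2 -> ex_RInt (fun t => f t * N t) 1 w).
  { intros w Hw. apply (ex_RInt_ext f).
    - rewrite Rmin_left, Rmax_right by lra. intros t Ht.
      rewrite parking_one, Rmult_1_r by lra. reflexivity.
    - apply (ex_RInt_continuous (V := R_CompleteNormedModule)). intros; apply Hf. }
  destruct (Rle_lt_dec z 1); [apply H01; lra |].
  apply (ex_RInt_Chasles _ 0 1 z); [apply H01; lra |].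
  destruct (Rle_lt_dec z 2); [apply H12; lra |].
  apply (ex_RInt_Chasles _ 1 2 z); [apply H12; lra |].
  apply (ex_RInt_continuous (V := R_CompleteNormedModule)).
  rewrite Rmin_left, Rmax_right by lra. intros t Ht.
  apply (continuous_mult f N); [apply Hf | apply HNc; lra].
Qed.

Lemma parking_continuous y : 1 < y -> continuous N y.
Proof.
  intros Hy.
  assert (Hk : forall k z, 1 < z < 2 + INR k -> continuous N z).
  { induction k as [| k IH]; intros z Hz.
    - simpl in Hz. apply (continuous_ext_loc _ (fun _ => 1)).
      + apply (locally_open_interval _ 1 2); [lra |].
        intros w Hw. symmetry. apply parking_one. lra.
      + apply continuous_const.
    - rewrite S_INR in Hz. pose proof (pos_INR k).
      destruct (Rlt_le_dec z (2 + INR k)); [apply IH; lra |].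
      assert (Hint : forall w, 0 < w < 2 + INR k ->
                     forall c, ex_RInt (fun t => exp (c * t) * N t) 0 w).
      { intros w Hw c. apply (parking_ex_RInt_upto (2 + INR k) IH); [| lra].
        intros; apply continuous_exp_scal. }
      replace z with (z - 1 + 1) by ring. apply continuous_shift.
      apply (continuous_ext_loc _ (fun w => 1 + G w * kernel_int lam N w)).
      + apply (locally_open_interval _ 0 (2 + INR k)); [lra |].
        intros w Hw. symmetry. apply (parking_step HN); [lra | apply Hint; lra].
      + apply (continuous_plus (fun _ => 1) (fun w => G w * kernel_int lam N w));
          [apply continuous_const |].
        apply (continuous_mult G (kernel_int lam N)).
        * apply (weight_continuous HN). lra.
        * apply continuous_kernel_int.
          apply (locally_open_interval _ 0 (2 + INR k)); [lra | exact Hint]. }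
  destruct (INR_unbounded y) as [k Hyk].
  apply (Hk k). pose proof (pos_INR k). lra.
Qed.

Lemma parking_ex_RInt_exp c z : 0 <= z -> ex_RInt (fun t => exp (c * t) * N t) 0 z.
Proof.
  intros Hz. apply (parking_ex_RInt_upto (z + 1)); [| intros; apply continuous_exp_scal | lra].
  intros y Hy. apply parking_continuous. lra.
Qed.

Lemma parking_eq x : 0 < x -> N (x + 1) = 1 + G x * kernel_int lam N x.
Proof.
  intros Hx. apply (parking_step HN); [exact Hx |].
  intros c. apply parking_ex_RInt_exp. lra.
Qed.

Lemma parking_bounded n : bounded_on N (fun x => x <= n).
Proof.
  set (b := Rmax n 2).
  destruct (continuity_ab_maj (fun x => Rabs (N x)) 2 b) as [xm [Hxm _]].
  - apply Rmax_r.
  - intros c Hc. apply continuity_pt_filterlim, continuous_Rabs_comp, parking_continuous. lra.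
  exists (1 + Rabs (N xm)). intros x Hx. pose proof (Rabs_pos (N xm)).
  destruct (Rle_lt_dec x 1). { rewrite (parking_init HN), Rabs_R0 by lra. lra. }
  destruct (Rle_lt_dec x 2). { rewrite parking_one, Rabs_R1 by lra. lra. }
  assert (x <= b) by (pose proof (Rmax_l n 2); unfold b; lra).
  specialize (Hxm x ltac:(lra)). lra.
Qed.

Lemma parking_Derive_flat x : x < 2 -> x <> 1 -> Derive N x = 0.
Proof.
  intros Hx2 Hx1. apply is_derive_unique.
  destruct (Rlt_or_le x 1) as [Hx | Hx].
  - apply (is_derive_ext_loc (fun _ => 0));
      [| apply (is_derive_const (K := R_AbsRing) (V := R_NormedModule))].
    apply (locally_open_interval _ (x - 1) 1); [lra |].
    intros w Hw. symmetry. apply (parking_init HN). lra.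
  - apply (is_derive_ext_loc (fun _ => 1));
      [| apply (is_derive_const (K := R_AbsRing) (V := R_NormedModule))].
    apply (locally_open_interval _ 1 2); [lra |].
    intros w Hw. symmetry. apply parking_one. lra.
Qed.

Lemma parking_is_derive :
  (forall x, 0 < x -> is_derive G x (- G x ^ 2 * exp (lam * x))) ->
  forall x, 1 < x -> is_derive N (x + 1) (step_deriv lam G N x).
Proof.
  intros HG x Hx. apply is_derive_shift.
  assert (Hint : locally x (fun w => forall c, ex_RInt (fun t => exp (c * t) * N t) 0 w)).
  { apply (locally_open_interval _ 0 (x + 1)); [lra |].
    intros w Hw c. apply parking_ex_RInt_exp. lra. }
  apply (is_derive_ext_loc (fun w => 1 + G w * kernel_int lam N w)).
  { apply (locally_open_interval _ 0 (x + 1)); [lra |].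
    intros w Hw. symmetry. apply parking_eq. lra. }
  assert (HK := is_derive_kernel_int lam N x Hint (parking_continuous x Hx)).
  assert (HGx := HG x ltac:(lra)).
  unfold step_deriv.
  auto_derive.
  - split; [exists (- G x ^ 2 * exp (lam * x)); exact HGx |].
    split; [eexists; exact HK | exact I].
  - replace (Derive (fun w => G w) x) with (- G x ^ 2 * exp (lam * x))
      by (symmetry; apply is_derive_unique; exact HGx).
    replace (Derive (fun w => kernel_int lam N w) x)
      with (lam * exp (lam * x) * exp_int (- lam) N x + (1 + exp (lam * x)) * N x)
      by (symmetry; apply is_derive_unique; exact HK).
    ring.
Qed.

End ParkingRecursion.

Lemma Renyi_parking_rec M : is_Renyi_M M -> parking_rec 0 Rinv M.
Proof.
  intros [Hinit Hstep]. split; [| exact Hinit |].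
  - intros x Hx. apply (ex_derive_continuous (K := R_AbsRing) (V := R_NormedModule)).
    auto_derive. lra.
  - intros x Hx _. rewrite Hstep by exact Hx.
    unfold kernel_int, exp_int.
    rewrite (RInt_ext (fun t => exp (- 0 * t) * M t) M)
      by (intros t _; rewrite Ropp_0, Rmult_0_l, exp_0; apply Rmult_1_l).
    rewrite (RInt_ext (fun t => exp (0 * t) * M t) M)
      by (intros t _; rewrite Rmult_0_l, exp_0; apply Rmult_1_l).
    rewrite Rmult_0_l, exp_0. field. lra.
Qed.

Definition exp_weight (lam x : R) : R := lam / (exp (lam * x) - 1).

Lemma exp_sub1_pos u : 0 < u -> 0 < exp u - 1.
Proof. intros Hu. pose proof (exp_ineq1 u). lra. Qed.

Lemma exp_parking_rec lam Ml : 0 < lam -> is_exp_parking_M lam Ml ->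
  parking_rec lam (exp_weight lam) Ml.
Proof.
  intros Hlam [Hinit Hstep]. split; [| exact Hinit |].
  - intros x Hx. apply (ex_derive_continuous (K := R_AbsRing) (V := R_NormedModule)).
    unfold exp_weight. auto_derive. pose proof (exp_sub1_pos (lam * x)). nra.
  - intros x Hx Hint. rewrite Hstep by exact Hx.
    pose proof (exp_sub1_pos (lam * x) ltac:(nra)).
    set (c := lam / (1 - exp (- lam * x))).
    set (fA := fun t => exp (- lam * t) * Ml t).
    set (fB := fun t => exp (lam * t) * Ml t).
    assert (IA := RInt_correct _ _ _ (Hint (- lam))). fold fA in IA.
    assert (IB := is_RInt_reflect _ _ _ (RInt_correct _ _ _ (Hint lam))). fold fB in IB.
    assert (I := is_RInt_plus _ _ _ _ _ _ (is_RInt_scal _ _ _ c _ IA)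
                   (is_RInt_scal _ _ _ (c * exp (- lam * x)) _ IB)).
    assert (Hpt : forall t, Rmin 0 x < t < Rmax 0 x ->
              plus (scal c (fA t)) (scal (c * exp (- lam * x)) (fB (x - t))) =
              lam * exp (- lam * t) / (1 - exp (- lam * x)) * (Ml t + Ml (x - t))).
    { intros t _. unfold fA, fB, c, plus, scal; simpl. unfold mult; simpl.
      assert (Ee : exp (- lam * x) * exp (lam * (x - t)) = exp (- lam * t))
        by (rewrite <- exp_plus; f_equal; ring).
      rewrite <- Ee. unfold Rdiv. ring. }
    rewrite (is_RInt_unique _ _ _ _ (is_RInt_ext _ _ _ _ _ Hpt I)).
    unfold kernel_int, exp_int, exp_weight, c. fold fA fB.
    unfold plus, scal; simpl. unfold mult; simpl.
    replace (- lam * x) with (- (lam * x)) by ring. rewrite exp_Ropp.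
    pose proof (exp_pos (lam * x)). field. lra.
Qed.

Lemma is_derive_exp_weight lam x : 0 < lam -> 0 < x ->
  is_derive (exp_weight lam) x (- exp_weight lam x ^ 2 * exp (lam * x)).
Proof.
  intros Hlam Hx. pose proof (exp_sub1_pos (lam * x) ltac:(nra)).
  unfold exp_weight. auto_derive; [lra | field; lra].
Qed.

Lemma is_derive_Rinv_weight x : 0 < x -> is_derive Rinv x (- (/ x) ^ 2 * exp (0 * x)).
Proof. intros Hx. auto_derive; [lra | rewrite Rmult_0_l, exp_0; field; lra]. Qed.

Lemma Rabs_exp_weight_sub_inv_le lam x : 0 < lam -> 0 < x ->
  Rabs (exp_weight lam x - / x) <= lam.
Proof.
  intros Hlam Hx. unfold exp_weight.
  set (u := lam * x). assert (Hu : 0 < u) by (unfold u; nra).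
  pose proof (exp_ineq1 u ltac:(lra)). pose proof (exp_ineq1_le (- u)). pose proof (exp_pos u).
  assert (Hinv : exp u * exp (- u) = 1) by (rewrite <- exp_plus, Rplus_opp_r; apply exp_0).
  (* [u <= exp u - 1 <= u exp u], so [(u - (exp u - 1)) / (x (exp u - 1))] lies in [[-lam, 0]] *)
  assert (Hup : exp u - 1 <= u * exp u).
  { assert (exp u * (exp (- u) - (1 - u)) >= 0) by (apply Rle_ge, Rmult_le_pos; lra). nra. }
  replace (lam / (exp u - 1) - / x) with ((u - (exp u - 1)) / (x * (exp u - 1)))
    by (unfold u in *; field; lra).
  rewrite Rabs_left1.
  - apply (Rmult_le_reg_r (x * (exp u - 1))); [nra |].
    unfold Rdiv. rewrite Ropp_mult_distr_l, Rmult_assoc, Rinv_l by nra. unfold u in *. nra.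
  - apply Rmult_le_0_r; [lra | apply Rlt_le, Rinv_0_lt_compat; nra].
Qed.

Definition unif_cvg0 (F : R -> R -> R) (f : R -> R) (S : R -> Prop) : Prop :=
  forall eps : posreal, at_right 0 (fun l => forall x, S x -> Rabs (F l x - f x) < eps).

(* Bounded limits make the class closed under products and integrals. *)
Definition bnd_unif_cvg0 (F : R -> R -> R) (f : R -> R) (S : R -> Prop) : Prop :=
  unif_cvg0 F f S /\ bounded_on f S.

Lemma bounded_on_pos f S : bounded_on f S -> exists K, 0 < K /\ forall x, S x -> Rabs (f x) <= K.
Proof.
  intros [K HK]. exists (Rabs K + 1). split; [pose proof (Rabs_pos K); lra |].
  intros x Hx. specialize (HK x Hx). pose proof (Rle_abs K). lra.
Qed.

Lemma bnd_unif_cvg0_sub F f (S S' : R -> Prop) :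
  (forall x, S' x -> S x) -> bnd_unif_cvg0 F f S -> bnd_unif_cvg0 F f S'.
Proof.
  intros HS [Hcvg [K HK]]. split.
  - intros eps. apply (filter_imp _ _ (fun l Hl x Hx => Hl x (HS x Hx)) (Hcvg eps)).
  - exists K. auto.
Qed.

Lemma bnd_unif_cvg0_ext F F' f f' (S : R -> Prop) :
  (forall l x, 0 < l -> S x -> F l x = F' l x) -> (forall x, S x -> f x = f' x) ->
  bnd_unif_cvg0 F f S -> bnd_unif_cvg0 F' f' S.
Proof.
  intros EF Ef [Hcvg [K HK]]. split.
  - intros eps. refine (filter_imp _ _ _ (filter_and _ _ (Hcvg eps) at_right0_pos)).
    intros l [Hl Hl0] x Hx. rewrite <- EF, <- Ef by assumption. auto.
  - exists K. intros x Hx. rewrite <- Ef by exact Hx. auto.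
Qed.

Lemma bnd_unif_cvg0_const c S : bnd_unif_cvg0 (fun _ _ => c) (fun _ => c) S.
Proof.
  split.
  - intros eps. apply filter_forall. intros l x _.
    rewrite Rminus_eq_0, Rabs_R0. apply cond_pos.
  - exists (Rabs c). intros; lra.
Qed.

Lemma bnd_unif_cvg0_param S : bnd_unif_cvg0 (fun l _ => l) (fun _ => 0) S.
Proof.
  split.
  - intros eps. apply (at_right0_intro _ eps (cond_pos eps)).
    intros l Hl x _. rewrite Rminus_0_r, Rabs_right; lra.
  - exists 0. intros. rewrite Rabs_R0. lra.
Qed.

Lemma bnd_unif_cvg0_plus F f H h S :
  bnd_unif_cvg0 F f S -> bnd_unif_cvg0 H h S ->
  bnd_unif_cvg0 (fun l x => F l x + H l x) (fun x => f x + h x) S.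
Proof.
  intros [CF [KF BF]] [CH [KH BH]]. split.
  - intros eps.
    set (e := mkposreal (eps / 2) ltac:(apply Rdiv_lt_0_compat; [apply cond_pos | lra])).
    refine (filter_imp _ _ _ (filter_and _ _ (CF e) (CH e))).
    intros l [Hf Hh] x Hx. specialize (Hf x Hx). specialize (Hh x Hx). simpl in Hf, Hh.
    replace (F l x + H l x - (f x + h x)) with ((F l x - f x) + (H l x - h x)) by ring.
    eapply Rle_lt_trans; [apply Rabs_triang | lra].
  - exists (KF + KH). intros x Hx.
    eapply Rle_trans; [apply Rabs_triang | specialize (BF x Hx); specialize (BH x Hx); lra].
Qed.

Lemma bnd_unif_cvg0_mult F f H h S :
  bnd_unif_cvg0 F f S -> bnd_unif_cvg0 H h S ->
  bnd_unif_cvg0 (fun l x => F l x * H l x) (fun x => f x * h x) S.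
Proof.
  intros [CF BF] [CH BH].
  destruct (bounded_on_pos _ _ BF) as [KF [HKF BF']].
  destruct (bounded_on_pos _ _ BH) as [KH [HKH BH']].
  split.
  - intros eps.
    assert (He : 0 < Rmin 1 (eps / (1 + KF + KH))).
    { apply Rmin_pos; [lra | apply Rdiv_lt_0_compat; [apply cond_pos | lra]]. }
    set (e := mkposreal _ He).
    refine (filter_imp _ _ _ (filter_and _ _ (CF e) (CH e))).
    intros l [Hf Hh] x Hx. specialize (Hf x Hx). specialize (Hh x Hx). simpl in Hf, Hh.
    specialize (BF' x Hx). specialize (BH' x Hx).
    pose proof (Rmin_l 1 (eps / (1 + KF + KH))). pose proof (Rmin_r 1 (eps / (1 + KF + KH))).
    assert (Hsplit : Rabs (F l x * H l x - f x * h x) <=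
      Rabs (F l x - f x) * Rabs (H l x - h x) + Rabs (F l x - f x) * Rabs (h x)
      + Rabs (f x) * Rabs (H l x - h x)).
    { rewrite <- !Rabs_mult.
      replace (F l x * H l x - f x * h x) with
        ((F l x - f x) * (H l x - h x) + (F l x - f x) * h x + f x * (H l x - h x)) by ring.
      eapply Rle_trans; [apply Rabs_triang |].
      apply Rplus_le_compat_r, Rabs_triang. }
    assert (Heps : Rmin 1 (eps / (1 + KF + KH)) * (1 + KF + KH) <= eps).
    { apply (Rle_trans _ (eps / (1 + KF + KH) * (1 + KF + KH))).
      - apply Rmult_le_compat_r; lra.
      - right. field. lra. }
    pose proof (Rabs_pos (F l x - f x)). pose proof (Rabs_pos (H l x - h x)).
    pose proof (Rabs_pos (f x)). pose proof (Rabs_pos (h x)).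
    nra.
  - exists (KF * KH). intros x Hx.
    rewrite Rabs_mult. apply Rmult_le_compat; try apply Rabs_pos; auto.
Qed.

Lemma bnd_unif_cvg0_RInt F f n : 0 <= n ->
  (forall l x, 0 < l -> 0 <= x <= n -> ex_RInt (F l) 0 x) ->
  (forall x, 0 <= x <= n -> ex_RInt f 0 x) ->
  bnd_unif_cvg0 F f (fun t => 0 <= t <= n) ->
  bnd_unif_cvg0 (fun l x => RInt (F l) 0 x) (fun x => RInt f 0 x) (fun x => 0 <= x <= n).
Proof.
  intros Hn IF If [C B]. destruct (bounded_on_pos _ _ B) as [K [HK HB]].
  split.
  - intros eps.
    set (e := mkposreal (eps / (n + 1)) ltac:(apply Rdiv_lt_0_compat; [apply cond_pos | lra])).
    refine (filter_imp _ _ _ (filter_and _ _ (C e) at_right0_pos)).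
    intros l [Hl Hl0] x Hx.
    assert (Hd : RInt (fun t => F l t - f t) 0 x = RInt (F l) 0 x - RInt f 0 x)
      by exact (RInt_minus (V := R_CompleteNormedModule) _ _ _ _ (IF l x Hl0 Hx) (If x Hx)).
    rewrite <- Hd.
    eapply Rle_lt_trans.
    + apply (abs_RInt_le_const _ 0 x e); [lra | |].
      * apply (ex_RInt_minus (V := R_NormedModule)); [apply IF | apply If]; auto.
      * intros t Ht. left. apply Hl. lra.
    + simpl. apply (Rle_lt_trans _ (n * (eps / (n + 1)))).
      * apply Rmult_le_compat_r; [apply Rlt_le, Rdiv_lt_0_compat; [apply cond_pos | lra] | lra].
      * replace (n * (eps / (n + 1))) with (eps - eps / (n + 1)) by (field; lra).
        assert (0 < eps / (n + 1)) by (apply Rdiv_lt_0_compat; [apply cond_pos | lra]).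
        lra.
  - exists (n * K). intros x Hx.
    eapply Rle_trans.
    + apply abs_RInt_le_const; [lra | apply If; auto | intros t Ht; apply HB; lra].
    + apply Rmult_le_compat_r; lra.
Qed.

Lemma bnd_unif_cvg0_exp (s : R -> R) n : 0 <= n -> (forall l, Rabs (s l) <= Rabs l) ->
  bnd_unif_cvg0 (fun l x => exp (s l * x)) (fun x => exp (s 0 * x)) (fun x => 0 <= x <= n).
Proof.
  intros Hn Hs.
  assert (Hs0 : s 0 = 0).
  { specialize (Hs 0). rewrite Rabs_R0 in Hs. pose proof (Rabs_pos (s 0)).
    apply Rabs_eq_0. lra. }
  rewrite Hs0. split.
  - intros eps. pose proof (cond_pos eps).
    assert (Hd : 0 < Rmin 1 eps / (3 * (n + 1))).
    { apply Rdiv_lt_0_compat; [apply Rmin_pos |]; lra. }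
    apply (at_right0_intro _ _ Hd). intros l Hl x Hx.
    rewrite Rmult_0_l, exp_0.
    pose proof (Rmin_l 1 eps). pose proof (Rmin_r 1 eps).
    assert (Hln : 3 * (l * (n + 1)) < Rmin 1 eps).
    { replace (Rmin 1 eps) with (Rmin 1 eps / (3 * (n + 1)) * (3 * (n + 1))) by (field; lra).
      nra. }
    assert (Hsx : Rabs (s l * x) <= l * (n + 1)).
    { rewrite Rabs_mult, (Rabs_right x) by lra.
      specialize (Hs l). rewrite (Rabs_right l) in Hs by lra. nra. }
    pose proof (Rabs_exp_sub1_le (s l * x) ltac:(lra)). lra.
  - exists 1. intros x _. rewrite Rmult_0_l, exp_0, Rabs_R1. lra.
Qed.

Lemma bnd_unif_cvg0_exp_weight :
  bnd_unif_cvg0 exp_weight Rinv (fun x => 1 <= x).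
Proof.
  split.
  - intros eps. apply (at_right0_intro _ eps (cond_pos eps)). intros l Hl x Hx.
    pose proof (Rabs_exp_weight_sub_inv_le l x ltac:(lra) ltac:(lra)). lra.
  - exists 1. intros x Hx. rewrite Rabs_right.
    + rewrite <- Rinv_1. apply Rinv_le_contravar; lra.
    + apply Rle_ge, Rlt_le, Rinv_0_lt_compat. lra.
Qed.

Section Convergence.

Variables (Mf : R -> R -> R) (M : R -> R).
Hypothesis HMf : forall l, 0 < l -> parking_rec l (exp_weight l) (Mf l).
Hypothesis HM : parking_rec 0 Rinv M.

Lemma bnd_unif_cvg0_exp_int (s : R -> R) n : 0 <= n -> (forall l, Rabs (s l) <= Rabs l) ->
  unif_cvg0 Mf M (fun x => x <= n) ->
  bnd_unif_cvg0 (fun l => exp_int (s l) (Mf l)) (exp_int (s 0) M) (fun x => 0 <= x <= n).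
Proof.
  intros Hn Hs Hcvg. unfold exp_int.
  apply (bnd_unif_cvg0_RInt (fun l t => exp (s l * t) * Mf l t)
           (fun t => exp (s 0 * t) * M t) n Hn).
  - intros l x Hl Hx. apply (parking_ex_RInt_exp _ _ _ (HMf l Hl)). lra.
  - intros x Hx. apply (parking_ex_RInt_exp _ _ _ HM). lra.
  - apply bnd_unif_cvg0_mult; [apply bnd_unif_cvg0_exp; assumption |].
    apply (bnd_unif_cvg0_sub _ _ (fun x => x <= n)); [intros; lra |].
    split; [exact Hcvg | apply (parking_bounded _ _ _ HM)].
Qed.

Lemma bnd_unif_cvg0_kernel_int n : 0 <= n -> unif_cvg0 Mf M (fun x => x <= n) ->
  bnd_unif_cvg0 (fun l => kernel_int l (Mf l)) (kernel_int 0 M) (fun x => 0 <= x <= n).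
Proof.
  intros Hn Hcvg. unfold kernel_int.
  apply bnd_unif_cvg0_plus; [apply bnd_unif_cvg0_mult |].
  - apply (bnd_unif_cvg0_exp (fun l => l)); [exact Hn | intros; apply Rle_refl].
  - apply (bnd_unif_cvg0_exp_int (fun l => - l)); [exact Hn | | exact Hcvg].
    intros l. rewrite Rabs_Ropp. apply Rle_refl.
  - apply (bnd_unif_cvg0_exp_int (fun l => l)); [exact Hn | intros; apply Rle_refl | exact Hcvg].
Qed.

Lemma unif_cvg0_parking n : unif_cvg0 Mf M (fun x => x <= n).
Proof.
  assert (Hk : forall k : nat, unif_cvg0 Mf M (fun x => x <= 2 + INR k)).
  { induction k as [| k IH].
    - intros eps. refine (filter_imp _ _ _ at_right0_pos). intros l Hl x Hx. simpl in Hx.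
      replace (Mf l x) with (M x); [rewrite Rminus_eq_0, Rabs_R0; apply cond_pos |].
      destruct (Rle_lt_dec x 1).
      + rewrite (parking_init HM), (parking_init (HMf l Hl)) by lra. reflexivity.
      + rewrite (parking_one _ _ _ HM), (parking_one _ _ _ (HMf l Hl)) by lra. reflexivity.
    - rewrite S_INR. pose proof (pos_INR k).
      assert (Hstep : bnd_unif_cvg0 (fun l z => 1 + exp_weight l z * kernel_int l (Mf l) z)
                        (fun z => 1 + / z * kernel_int 0 M z) (fun z => 1 <= z <= 2 + INR k)).
      { apply bnd_unif_cvg0_plus; [apply bnd_unif_cvg0_const |].
        apply bnd_unif_cvg0_mult.
        - exact (bnd_unif_cvg0_sub _ _ _ _ (fun z Hz => proj1 Hz) bnd_unif_cvg0_exp_weight).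
        - apply (bnd_unif_cvg0_sub _ _ (fun z => 0 <= z <= 2 + INR k)); [intros; lra |].
          apply bnd_unif_cvg0_kernel_int; [lra | exact IH]. }
      intros eps.
      refine (filter_imp _ _ _
                (filter_and _ _ (filter_and _ _ (IH eps) (proj1 Hstep eps)) at_right0_pos)).
      intros l [[Hlow Hhigh] Hl] x Hx.
      destruct (Rle_lt_dec x (2 + INR k)); [apply Hlow; lra |].
      replace x with (x - 1 + 1) by ring.
      rewrite (parking_eq _ _ _ HM), (parking_eq _ _ _ (HMf l Hl)) by lra.
      apply Hhigh. lra. }
  intros eps. destruct (INR_unbounded n) as [k Hnk].
  refine (filter_imp _ _ _ (Hk k eps)). intros l Hl x Hx. apply Hl. pose proof (pos_INR k). lra.
Qed.

Lemma bnd_unif_cvg0_step_deriv b : 0 <= b ->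
  bnd_unif_cvg0 (fun l => step_deriv l (exp_weight l) (Mf l)) (step_deriv 0 Rinv M)
    (fun x => 1 <= x <= b).
Proof.
  intros Hb.
  assert (Hcvg := unif_cvg0_parking b).
  assert (Hsub : forall x, 1 <= x <= b -> 0 <= x <= b) by (intros; lra).
  assert (UG : bnd_unif_cvg0 exp_weight Rinv (fun x => 1 <= x <= b))
    by exact (bnd_unif_cvg0_sub _ _ _ _ (fun x Hx => proj1 Hx) bnd_unif_cvg0_exp_weight).
  assert (UE := bnd_unif_cvg0_sub _ _ _ _ Hsub
                  (bnd_unif_cvg0_exp (fun l => l) b Hb (fun l => Rle_refl _))).
  assert (UA : bnd_unif_cvg0 (fun l => exp_int (- l) (Mf l)) (exp_int (- 0) M)
                 (fun x => 1 <= x <= b)).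
  { apply (bnd_unif_cvg0_sub _ _ _ _ Hsub).
    apply (bnd_unif_cvg0_exp_int (fun l => - l)); [exact Hb | | exact Hcvg].
    intros l. rewrite Rabs_Ropp. apply Rle_refl. }
  assert (UK := bnd_unif_cvg0_sub _ _ _ _ Hsub (bnd_unif_cvg0_kernel_int b Hb Hcvg)).
  assert (UN : bnd_unif_cvg0 Mf M (fun x => 1 <= x <= b)).
  { apply (bnd_unif_cvg0_sub _ _ (fun x => x <= b)); [intros; lra |].
    split; [exact Hcvg | apply (parking_bounded _ _ _ HM)]. }
  eapply bnd_unif_cvg0_ext; cycle 2.
  { apply bnd_unif_cvg0_plus.
    - apply bnd_unif_cvg0_mult; [| exact UK].
      apply bnd_unif_cvg0_mult; [| exact UE].
      apply bnd_unif_cvg0_mult; [apply (bnd_unif_cvg0_const (-1)) |].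
      apply bnd_unif_cvg0_mult; exact UG.
    - apply bnd_unif_cvg0_mult; [exact UG |].
      apply bnd_unif_cvg0_plus; apply bnd_unif_cvg0_mult.
      + apply bnd_unif_cvg0_mult; [apply bnd_unif_cvg0_param | exact UE].
      + exact UA.
      + apply bnd_unif_cvg0_plus; [apply (bnd_unif_cvg0_const 1) | exact UE].
      + exact UN. }
  all: intros; unfold step_deriv; ring.
Qed.

End Convergence.

Theorem lemma2 (Mfam : R -> R -> R) (M : R -> R)
  (HM : is_Renyi_M M)
  (HMl : forall lam, 0 < lam -> is_exp_parking_M lam (Mfam lam)) :
  forall b, 0 <= b ->
  forall eps, 0 < eps ->
  exists delta, 0 < delta /\
    forall lam, 0 < lam -> lam < delta ->
    forall x, 0 <= x <= b -> x <> 1 -> x <> 2 ->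
      Rabs (Derive (Mfam lam) x - Derive M x) < eps.
Proof.
  intros b Hb eps Heps.
  assert (HrecM := Renyi_parking_rec M HM).
  assert (HrecMl : forall l, 0 < l -> parking_rec l (exp_weight l) (Mfam l))
    by (intros l Hl; exact (exp_parking_rec l _ Hl (HMl l Hl))).
  destruct (at_right0_elim _ (proj1 (bnd_unif_cvg0_step_deriv Mfam M HrecMl HrecM b Hb)
                                     (mkposreal eps Heps))) as [d [Hd Hcvg]].
  exists d. split; [exact Hd |]. intros l Hl Hld x Hx Hx1 Hx2.
  destruct (Rlt_or_le x 2) as [Hlt2 | Hge2].
  - rewrite (parking_Derive_flat _ _ _ (HrecMl l Hl)), (parking_Derive_flat _ _ _ HrecM)
      by assumption.
    rewrite Rminus_0_r, Rabs_R0. exact Heps.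
  - assert (Hgt2 : 2 < x) by (destruct Hge2; [assumption | congruence]).
    replace x with (x - 1 + 1) by ring.
    rewrite (is_derive_unique _ _ _ (parking_is_derive _ _ _ (HrecMl l Hl)
               (fun y Hy => is_derive_exp_weight l y Hl Hy) (x - 1) ltac:(lra))),
      (is_derive_unique _ _ _
         (parking_is_derive _ _ _ HrecM is_derive_Rinv_weight (x - 1) ltac:(lra))).
    apply Hcvg; lra.
Qed.
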